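(* Let $\Theta$ be a non-empty finite set, let $\mathcal{S}$ be a measurable subset of $\Delta(\Theta)$, and fix an interview cost $c>0$. Let $\pi,\pi'\in\Delta(\mathcal{S})$ be two populations with the same skill distribution, i.e. $p_\pi=p_{\pi'}$. Then: (a) There is systematic ex-ante discrimination against $\pi$ if and only if $\pi' \mathrel{M} \pi$ and $\pi\neq\pi'$. (b) There is unsystematic ex-ante discrimination if and only if neither $\pi \mathrel{M} \pi'$ nor $\pi' \mathrel{M} \pi$ holds. (c) There is no ex-ante discrimination if and only if $\pi=\pi'$.
   Context: $\Delta(\Theta)$ denotes the set of probability distributions on $\Theta$ (with its Borel $\sigma$-algebra). A population is a probability measure $\pi\in\Delta(\mathcal{S})$; its skill distribution is $p_\pi(\theta)=\int_{\mathcal{S}} s(\theta)\,\pi(\mathrm{d}s)$ for $\theta\in\Theta$. For a non-empty finite $A\subset\mathbb{R}^\Theta$, $v_A(s)=\max_{a\in A}\sum_{\theta\in\Theta}a(\theta)s(\theta)$. A firm is a pair $(A,\alpha)$ with $A$ a non-empty finite subset of $\mathbb{R}^\Theta$ and $0<\alpha\le 1$. Firm $(A,\alpha)$ excludes population $\pi$ if $\alpha\int_{\mathcal{S}}\max\{v_A,0\}\,\mathrm{d}\pi\le c$ (and interviews $\pi$ otherwise). For $\pi,\pi'$ with $p_\pi=p_{\pi'}$: there is systematic ex-ante discrimination against $\pi$ if every firm that excludes $\pi'$ also excludes $\pi$, and some firm excludes $\pi$ but not $\pi'$. There is unsystematic ex-ante discrimination if there is a firm that excludes $\pi$ but not $\pi'$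 and a firm that excludes $\pi'$ but not $\pi$. There is no ex-ante discrimination if there is neither systematic ex-ante discrimination (against $\pi$ or against $\pi'$) nor unsystematic ex-ante discrimination. $\pi' \mathrel{M} \pi$ means $\int_{\mathcal{S}} h\,\mathrm{d}\pi'\ge\int_{\mathcal{S}} h\,\mathrm{d}\pi$ for every convex continuous $h:\Delta(\Theta)\to\mathbb{R}$. *)

From HB Require Import structures.
From mathcomp Require Import all_boot all_order all_algebra.
From mathcomp Require Import all_classical all_reals.
From mathcomp Require Import ereal topology normedtype sequences measure
  lebesgue_measure lebesgue_integral probability.
Set Implicit Arguments. Unset Strict Implicit. Unset Printing Implicit Defensive.
Import Order.TTheory GRing.Theory Num.Theory.
Local Open Scope classical_set_scope.
Local Open Scope ring_scope.

(* The finite type of skills Theta is represented by 'I_n (n > 0 in the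
   theorem); a vector in R^Theta is an n.-tuple R, with the product
   (= Borel, since Theta is finite) sigma-algebra of the library. *)

Section Defs.
Variables (R : realType) (n : nat).

Definition vec := (n.-tuple R).

Definition simplex : set vec :=
  [set s | (forall i, 0 <= tnth s i) /\ \sum_(i < n) tnth s i = 1].

Definition dotv (a s : vec) : R := \sum_(i < n) tnth a i * tnth s i.

Definition vA (A : seq vec) (s : vec) : R :=
  match A with
  | [::] => 0
  | a0 :: A' => \big[Num.max/dotv a0 s]_(a <- A') dotv a s
  end.

Definition is_firm (A : seq vec) (alpha : R) : Prop :=
  A <> [::] /\ 0 < alpha <= 1.

Variable (S : set vec).

Definition skill (pi : probability vec R) (i : 'I_n) : \bar R :=
  (\int[pi]_(s in S) (tnth s i)%:E)%E.

Definition excludes (c : R) (A : seq vec) (alpha : R)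
  (pi : probability vec R) : Prop :=
  (alpha%:E * \int[pi]_(s in S) (Num.max (vA A s) 0)%:E <= c%:E)%E.

Definition sys_disc (c : R) (pi pi' : probability vec R) : Prop :=
  (forall A alpha, is_firm A alpha ->
     excludes c A alpha pi' -> excludes c A alpha pi) /\
  (exists A alpha, is_firm A alpha /\
     excludes c A alpha pi /\ ~ excludes c A alpha pi').

Definition unsys_disc (c : R) (pi pi' : probability vec R) : Prop :=
  (exists A alpha, is_firm A alpha /\
     excludes c A alpha pi /\ ~ excludes c A alpha pi') /\
  (exists A alpha, is_firm A alpha /\
     excludes c A alpha pi' /\ ~ excludes c A alpha pi).

Definition no_disc (c : R) (pi pi' : probability vec R) : Prop :=
  ~ sys_disc c pi pi' /\ ~ sys_disc c pi' pi /\ ~ unsys_disc c pi pi'.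

Definition convex_on_simplex (h : vec -> R) : Prop :=
  forall x y t, simplex x -> simplex y -> 0 <= t <= 1 ->
    h [tuple t * tnth x i + (1 - t) * tnth y i | i < n]
    <= t * h x + (1 - t) * h y.

(* continuity of h on Delta(Theta) (subspace of R^Theta, whose product
   topology is induced by the sup-distance) *)
Definition continuous_on_simplex (h : vec -> R) : Prop :=
  forall x, simplex x -> forall e : R, 0 < e -> exists2 d : R, 0 < d &
    forall y, simplex y -> (forall i, `|tnth y i - tnth x i| < d) ->
      `|h y - h x| < e.

Definition Mrel (pi' pi : probability vec R) : Prop :=
  forall h : vec -> R, convex_on_simplex h -> continuous_on_simplex h ->
    (\int[pi]_(s in S) (h s)%:E <= \int[pi']_(s in S) (h s)%:E)%E.

End Defs.

From HB Require Import structures.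
From mathcomp Require Import all_boot all_order all_algebra.
From mathcomp Require Import all_classical all_reals.
From mathcomp Require Import ereal topology normedtype sequences measure
  lebesgue_measure lebesgue_integral probability.
From mathcomp Require Import ring lra measurable_realfun numfun derive.
Import Order.TTheory GRing.Theory Num.Theory numFieldNormedType.Exports.
Local Open Scope classical_set_scope.
Local Open Scope ring_scope.

Set Implicit Arguments.
Unset Strict Implicit.
Unset Printing Implicit Defensive.

(** Write V_pi(A) for the expected payoff E_pi[max(v_A, 0)], so that firm
   (A, alpha) excludes pi iff alpha * V_pi(A) <= c.  Since V_pi(l A) = l V_pi(A)
   for l > 0, any strict inequality V_pi(A) < V_pi'(A) is witnessed by a firm
   excluding pi but not pi', and all three kinds of discrimination become
   statements about the preorder "V_pi <= V_pi' for every A".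

   This preorder is the order M: V_pi <= V_pi' for every A iff pi' M pi.
   The payoffs max(v_A, 0) are convex and continuous on the simplex.
   Conversely a convex continuous h is, uniformly on the simplex, a maximum of
   finitely many affine minorants, i.e. a limit of functions v_A, and on the
   simplex v_A plus a large constant is itself a payoff max(v_A', 0).  The affine minorants come from projecting a point
   below the graph of h onto its epigraph (a minimum exists by compactness).

   Finally V_pi = V_pi' forces pi = pi': with g the gap of a point to an upper
   orthant, max(1 - K g, 0) is a combination of the constant 1 and two payoffs,
   and it tends to the indicator of the orthant as K grows; upper orthants
   form a pi-system generating the Borel sets. *)

(** * Vectors and the functions v_A *)

Section Vectors.
Variables (R : realType) (n : nat).
Local Notation vec := (vec R n).
Implicit Types (a s x y : vec) (A : seq vec).

Definition vconst (k : R) : vec := [tuple k | _ < n].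
Definition ve (j : 'I_n) : vec := [tuple (i == j)%:R | i < n].
Definition vadd a b : vec := [tuple tnth a i + tnth b i | i < n].
Definition vscale (k : R) a : vec := [tuple k * tnth a i | i < n].
Definition comb (t : R) x y : vec :=
  [tuple t * tnth x i + (1 - t) * tnth y i | i < n].
Definition l1norm a : R := \sum_(i < n) `|tnth a i|.

Lemma dotvD a b s : dotv (vadd a b) s = dotv a s + dotv b s.
Proof.
rewrite /dotv -big_split /=; apply: eq_bigr => i _.
by rewrite tnth_mktuple mulrDl.
Qed.

Lemma dotvZ k a s : dotv (vscale k a) s = k * dotv a s.
Proof.
rewrite /dotv mulr_sumr; apply: eq_bigr => i _.
by rewrite tnth_mktuple mulrA.
Qed.

Lemma dotv_vconst k s : simplex s -> dotv (vconst k) s = k.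
Proof.
move=> [_ s1]; rewrite /dotv -[RHS]mulr1 -s1 mulr_sumr.
by apply: eq_bigr => i _; rewrite tnth_mktuple.
Qed.

Lemma dotv_ve j s : dotv (ve j) s = tnth s j.
Proof.
rewrite /dotv (bigD1 j) //= tnth_mktuple eqxx mul1r big1 ?addr0 //.
by move=> i /negbTE ij; rewrite tnth_mktuple ij mul0r.
Qed.

Lemma dotv_comb a t x y :
  dotv a (comb t x y) = t * dotv a x + (1 - t) * dotv a y.
Proof.
rewrite /dotv !mulr_sumr -big_split /=; apply: eq_bigr => i _.
by rewrite tnth_mktuple; ring.
Qed.

Lemma simplex_comb t x y : simplex x -> simplex y -> 0 <= t <= 1 ->
  simplex (comb t x y).
Proof.
move=> [x0 x1] [y0 y1] /andP[t0 t1]; split.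
  by move=> i; rewrite tnth_mktuple addr_ge0 // mulr_ge0 // subr_ge0.
under eq_bigr do rewrite tnth_mktuple.
by rewrite big_split /= -!mulr_sumr x1 y1 !mulr1 addrC subrK.
Qed.

Lemma simplex_ve j : simplex (ve j).
Proof.
split=> [i|]; first by rewrite tnth_mktuple ler0n.
rewrite (bigD1 j) //= tnth_mktuple eqxx big1 ?addr0 // => i /negbTE ij.
by rewrite tnth_mktuple ij.
Qed.

Lemma simplex_tnth_le1 s i : simplex s -> 0 <= tnth s i <= 1.
Proof.
move=> [s0 s1]; rewrite s0 -s1 (bigD1 i) //= lerDl.
by apply: sumr_ge0 => j _; exact: s0.
Qed.

Lemma l1norm_ge0 a : 0 <= l1norm a.
Proof. by apply: sumr_ge0 => i _. Qed.

Lemma ler_norm_dotv a s : simplex s -> `|dotv a s| <= l1norm a.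
Proof.
move=> ss; apply: le_trans (ler_norm_sum _ _ _) _.
apply: ler_sum => i _; rewrite normrM.
have /andP[s0 s1] := simplex_tnth_le1 i ss.
by rewrite -[leRHS]mulr1 ler_wpM2l // ger0_norm.
Qed.

Lemma ler_dist_dotv a x y d : (forall i, `|tnth y i - tnth x i| < d) ->
  `|dotv a y - dotv a x| <= l1norm a * d.
Proof.
move=> yx; rewrite /dotv -sumrB /l1norm mulr_suml.
apply: le_trans (ler_norm_sum _ _ _) _; apply: ler_sum => i _.
by rewrite -mulrBr normrM ler_wpM2l // ltW.
Qed.

Lemma le_vA A s a : a \in A -> dotv a s <= vA A s.
Proof.
case: A => [//|a0 A]; rewrite inE /= => /predU1P[->|aA].
  exact: bigmax_ge_id.
exact: (le_bigmax_seq _ _ xpredT _ aA).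
Qed.

Lemma vA_le A s M : A != [::] -> (forall a, a \in A -> dotv a s <= M) ->
  vA A s <= M.
Proof.
case: A => [//|a0 A] _ AM /=.
rewrite big_seq_cond; apply: bigmax_le => [|a /andP[aA _]].
  by apply: AM; rewrite mem_head.
by apply: AM; rewrite inE aA orbT.
Qed.

Lemma vA_attained A s : A != [::] -> exists2 a, a \in A & vA A s = dotv a s.
Proof.
case: A => [//|a0 A] _ /=.
elim: A => [|b A [a aA IH]]; first by exists a0; rewrite ?mem_head ?big_nil.
rewrite big_cons IH; have [ab|ba] := leP (dotv b s) (dotv a s).
  exists a; rewrite ?max_r //.
  by move: aA; rewrite !inE => /orP[->|->]; rewrite ?orbT.
by exists b; rewrite ?max_l ?ltW // !inE eqxx orbT.
Qed.

Lemma vA_map (f : vec -> vec) (g : R -> R) A s : A != [::] ->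
  {homo g : u v / u <= v} -> (forall a, dotv (f a) s = g (dotv a s)) ->
  vA (map f A) s = g (vA A s).
Proof.
move=> A0 g_homo fg.
have fA0 : map f A != [::] by rewrite -size_eq0 size_map size_eq0.
apply/le_anti/andP; split.
  by apply: vA_le => // _ /mapP[a aA ->]; rewrite fg g_homo // le_vA.
have [a aA ->] := vA_attained s A0.
by rewrite -fg le_vA // map_f.
Qed.

Definition vA_bound A : R := \big[Num.max/0]_(a <- A) l1norm a.

Lemma vA_bound_ge0 A : 0 <= vA_bound A.
Proof. exact: bigmax_ge_id. Qed.

Lemma l1norm_le_vA_bound A a : a \in A -> l1norm a <= vA_bound A.
Proof. by move=> aA; exact: (le_bigmax_seq _ _ xpredT _ aA). Qed.

Lemma ler_norm_vA A s : A != [::] -> simplex s -> `|vA A s| <= vA_bound A.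
Proof.
move=> A0 ss; have [a aA ->] := vA_attained s A0.
exact: le_trans (ler_norm_dotv a ss) (l1norm_le_vA_bound aA).
Qed.

Lemma measurable_dotv (D : set vec) a : measurable D -> measurable_fun D (dotv a).
Proof.
move=> mD; apply: measurable_sum => i.
apply: measurable_funM; first exact: measurable_cst.
exact: measurable_funS (measurable_tnth i).
Qed.

Lemma measurable_vA (D : set vec) A : measurable D -> measurable_fun D (vA A).
Proof.
move=> mD; case: A => [|a0 A]; first exact: measurable_cst.
rewrite /vA; elim: A => [|b A IH].
  by under eq_fun do rewrite big_nil; exact: measurable_dotv.
under eq_fun do rewrite big_cons.
exact: measurable_maxr (measurable_dotv b mD) IH.
Qed.

End Vectors.

Arguments vconst {R n} k.
Arguments ve {R n} j.
Arguments simplex_ve {R n} j.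

(** * Expected payoffs and exclusion *)

Section Values.
Variables (R : realType) (n : nat) (S : set (vec R n)).
Hypotheses (mS : measurable S) (sS : S `<=` simplex (n:=n)).
Local Notation vec := (vec R n).
Implicit Types (mu : probability vec R) (A : seq vec) (f : vec -> R).

Lemma integrable_bounded mu f M : measurable_fun S f ->
  (forall s, S s -> `|f s| <= M) -> mu.-integrable S (EFin \o f).
Proof.
move=> mf fM; apply: measurable_bounded_integrable => //.
  by apply: le_lt_trans (probability_le1 mu mS) _; rewrite ltry.
exists M; split; first exact: num_real.
by move=> x Mx s Ss; exact: le_trans (fM _ Ss) (ltW Mx).
Qed.

Lemma EFin_Rintegral mu f : mu.-integrable S (EFin \o f) ->
  (\int[mu]_(s in S) f s)%:E = (\int[mu]_(s in S) (f s)%:E)%E.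
Proof. by move=> intf; rewrite fineK // (integrable_fin_num mS intf). Qed.

Lemma Rintegral_cst_full mu k : mu S = 1%E -> \int[mu]_(s in S) k = k.
Proof.
move=> muS; rewrite Rintegral_cst // -[RHS]mulr1; congr (_ * _).
by rewrite -[RHS]/(fine 1%E) -muS.
Qed.

Lemma integrable_EFinD mu f g : mu.-integrable S (EFin \o f) ->
  mu.-integrable S (EFin \o g) -> mu.-integrable S (EFin \o (f \+ g)).
Proof. by move=> intf intg; exact: eq_integrable (integrableD mS intf intg). Qed.

Lemma integrable_EFinB mu f g : mu.-integrable S (EFin \o f) ->
  mu.-integrable S (EFin \o g) -> mu.-integrable S (EFin \o (f \- g)).
Proof. by move=> intf intg; exact: eq_integrable (integrableB mS intf intg). Qed.

Lemma integrable_vA mu A : A != [::] -> mu.-integrable S (EFin \o vA A).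
Proof.
move=> A0; apply: (@integrable_bounded _ _ (vA_bound A)).
  exact: measurable_vA.
by move=> s /sS; exact: ler_norm_vA.
Qed.

Definition payoff A : vec -> R := (vA A)^\+.

Definition value mu A : R := \int[mu]_(s in S) payoff A s.

Definition value_le mu1 mu2 : Prop :=
  forall A, A != [::] -> value mu1 A <= value mu2 A.

Lemma integrable_payoff mu A : A != [::] -> mu.-integrable S (EFin \o payoff A).
Proof. by move=> A0; exact: integrable_funrpos (integrable_vA mu A0). Qed.

Lemma value_ge0 mu A : 0 <= value mu A.
Proof. by apply: Rintegral_ge0 => s _; exact: funrpos_ge0. Qed.

Lemma value_scale mu k A : 0 < k -> A != [::] ->
  value mu (map (vscale k) A) = k * value mu A.
Proof.
move=> k0 A0; rewrite /value -RintegralZl //; last exact: integrable_payoff.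
apply: eq_Rintegral => s _; rewrite /payoff /funrpos.
rewrite (vA_map (g := *%R k)) //; last by move=> a; rewrite dotvZ.
  by rewrite (maxr_pMr _ _ (ltW k0)) mulr0.
by move=> u v uv; rewrite ler_wpM2l // ltW.
Qed.

Lemma eq_value_le mu1 mu2 : (forall B, measurable B -> mu1 B = mu2 B) ->
  value_le mu1 mu2.
Proof.
move=> mu12 A A0; rewrite /value /Rintegral (eq_measure_integral mu2) //.
by move=> B mB _; exact: mu12.
Qed.

Variable c : R.
Hypothesis c0 : 0 < c.

Lemma excludesE mu A alpha : mu S = 1%E -> A != [::] ->
  excludes S c A alpha mu <-> alpha * value mu A <= c.
Proof.
move=> muS A0; rewrite /excludes.
by rewrite -(EFin_Rintegral (integrable_payoff mu A0)) -EFinM lee_fin.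
Qed.

Lemma separating_firmP (pi1 pi2 : probability vec R) :
  pi1 S = 1%E -> pi2 S = 1%E ->
  (exists A alpha, is_firm A alpha /\
     excludes S c A alpha pi1 /\ ~ excludes S c A alpha pi2) <->
  ~ value_le pi2 pi1.
Proof.
move=> pi1S pi2S; split.
  move=> [A [alpha [[/eqP A0 /andP[alpha0 _]] []]]].
  rewrite !excludesE // => ex1 nex2 le21; apply: nex2.
  by apply: le_trans ex1; rewrite ler_wpM2l ?le21 // ltW.
move=> not_le21.
have [A A0 lt12] : exists2 A, A != [::] & value pi1 A < value pi2 A.
  apply: contrapT => none; apply: not_le21 => A A0; rewrite leNgt.
  by apply/negP => lt12; apply: none; exists A.
have v1_ge0 := value_ge0 pi1 A.
(* scaling A by l puts c strictly between the values for pi1 and pi2 *)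
pose l := 2 * c / (value pi1 A + value pi2 A).
have l0 : 0 < l by rewrite divr_gt0 ?mulr_gt0 //; lra.
have lA0 : map (vscale l) A != [::] by rewrite -size_eq0 size_map size_eq0.
exists (map (vscale l) A), 1.
split; first by split; [exact/eqP | rewrite ltr01 lexx].
rewrite !excludesE // !value_scale // !mul1r /l mulrAC.
rewrite ler_pdivrMr ?ltr_wpDl ?(le_lt_trans v1_ge0) //.
have gap : 0 < c * (value pi2 A - value pi1 A) by rewrite mulr_gt0 // subr_gt0.
split; first lra.
apply/negP; rewrite -ltNge mulrAC ltr_pdivlMr ?ltr_wpDl ?(le_lt_trans v1_ge0) //.
lra.
Qed.

Section TwoPopulations.
Variables pi1 pi2 : probability vec R.
Hypotheses (pi1S : pi1 S = 1%E) (pi2S : pi2 S = 1%E).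

Lemma excludes_implyP :
  (forall A alpha, is_firm A alpha ->
     excludes S c A alpha pi2 -> excludes S c A alpha pi1) <->
  value_le pi1 pi2.
Proof.
split=> [every | le12 A alpha [/eqP A0 /andP[alpha0 _]]].
  apply: contrapT; rewrite -(separating_firmP pi2S pi1S).
  by move=> [A [alpha [firm [ex2 nex1]]]]; apply: nex1; exact: every.
rewrite !excludesE // => ex2; apply: le_trans ex2.
by rewrite ler_wpM2l ?le12 // ltW.
Qed.

Lemma sys_discE :
  sys_disc S c pi1 pi2 <-> value_le pi1 pi2 /\ ~ value_le pi2 pi1.
Proof. by rewrite /sys_disc excludes_implyP separating_firmP. Qed.

Lemma unsys_discE :
  unsys_disc S c pi1 pi2 <-> ~ value_le pi2 pi1 /\ ~ value_le pi1 pi2.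
Proof. by rewrite /unsys_disc !separating_firmP. Qed.

End TwoPopulations.

End Values.

(** * Payoffs are convex and continuous *)

Section PayoffRegularity.
Variables (R : realType) (n : nat).
Local Notation vec := (vec R n).
Variable A : seq vec.
Hypothesis A0 : A != [::].

Lemma vA_comb t x y : 0 <= t <= 1 ->
  vA A (comb t x y) <= t * vA A x + (1 - t) * vA A y.
Proof.
move=> /andP[t0 t1]; apply: vA_le => // a aA; rewrite dotv_comb.
by apply: lerD; apply: ler_wpM2l; rewrite ?subr_ge0 ?le_vA.
Qed.

Lemma payoff_convex : convex_on_simplex (payoff A).
Proof.
move=> x y t _ _ t01; have /andP[t0 t1] := t01.
rewrite [X in payoff A X <= _]/(comb t x y) /payoff /funrpos ge_max.
rewrite (le_trans (vA_comb x y t01)) /=; last first.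
  by apply: lerD; apply: ler_wpM2l; rewrite ?subr_ge0 // le_max lexx.
by apply: addr_ge0; apply: mulr_ge0; rewrite ?subr_ge0 // le_max lexx orbT.
Qed.

Lemma vA_le_dist x y d : 0 <= d -> (forall i, `|tnth y i - tnth x i| < d) ->
  vA A y <= vA A x + vA_bound A * d.
Proof.
move=> d0 yx; have [a aA ->] := vA_attained y A0.
have := ler_dist_dotv a yx; rewrite ler_norml => /andP[_ ayx].
have := le_vA x aA; have := ler_wpM2r d0 (l1norm_le_vA_bound aA); lra.
Qed.

Lemma payoff_le_dist x y d : 0 <= d -> (forall i, `|tnth y i - tnth x i| < d) ->
  payoff A y <= payoff A x + vA_bound A * d.
Proof.
move=> d0 yx; have Bd0 : 0 <= vA_bound A * d by rewrite mulr_ge0 ?vA_bound_ge0.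
rewrite /payoff /funrpos ge_max; apply/andP; split.
  apply: le_trans (vA_le_dist d0 yx) _.
  by rewrite lerD2r le_max lexx.
by rewrite addr_ge0 // le_max lexx orbT.
Qed.

Lemma payoff_continuous : continuous_on_simplex (payoff A).
Proof.
move=> x _ e e0; have B1 : 0 < vA_bound A + 1 by rewrite ltr_wpDl ?vA_bound_ge0.
have d0 : 0 < e / (vA_bound A + 1) by rewrite divr_gt0.
exists (e / (vA_bound A + 1)) => // y _ yx.
have xy i : `|tnth x i - tnth y i| < e / (vA_bound A + 1) by rewrite distrC.
have Bd : vA_bound A * (e / (vA_bound A + 1)) < e.
  by rewrite mulrA ltr_pdivrMr // mulrC ltr_pM2l //; lra.
have := payoff_le_dist (ltW d0) yx; have := payoff_le_dist (ltW d0) xy.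
by rewrite ltr_norml; lra.
Qed.

End PayoffRegularity.

Lemma Mrel_value_le (R : realType) (n : nat) (S : set (vec R n))
    (pi1 pi2 : probability (vec R n) R) :
  measurable S -> S `<=` simplex (n:=n) -> Mrel S pi2 pi1 -> value_le S pi1 pi2.
Proof.
move=> mS sS M21 A A0.
have := M21 _ (payoff_convex A0) (payoff_continuous A0).
by rewrite -!EFin_Rintegral ?lee_fin //; exact: integrable_payoff.
Qed.

(** * Equal expected payoffs determine the population *)

Section Orthants.
Variables (R : realType) (n : nat).
Local Notation vec := (vec R n).
Implicit Types (L : seq ('I_n * R)) (s : vec).

Definition orthant L : set vec :=
  [set s | forall p, p \in L -> p.2 <= tnth s p.1].

Lemma orthant_nil : orthant [::] = setT.
Proof. by apply/seteqP; split => s. Qed.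

Lemma orthant_cat L1 L2 : orthant L1 `&` orthant L2 = orthant (L1 ++ L2).
Proof.
apply/seteqP; split => s.
  by move=> [s1 s2] p; rewrite mem_cat => /orP[/s1|/s2].
by move=> s12; split => p pL; apply: s12; rewrite mem_cat pL ?orbT.
Qed.

Lemma orthant_cons p L :
  orthant (p :: L) = (fun s : vec => tnth s p.1) @^-1` `[p.2, +oo[ `&` orthant L.
Proof.
rewrite -cat1s -orthant_cat; congr (_ `&` _).
apply/seteqP; split => s /=; rewrite in_itv /= andbT.
  by apply; rewrite mem_head.
by move=> ps q; rewrite inE => /eqP->.
Qed.

Lemma measurable_orthant L : measurable (orthant L).
Proof.
elim: L => [|p L IH]; first by rewrite orthant_nil.
rewrite orthant_cons; apply: measurableI => //.
by rewrite -[X in measurable X]setTI; exact: measurable_tnth.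
Qed.

Lemma setI_closed_orthant : setI_closed (range orthant).
Proof.
by move=> _ _ [L1 _ <-] [L2 _ <-]; exists (L1 ++ L2); rewrite ?orthant_cat.
Qed.

Lemma measurable_orthantE : @measurable _ vec = <<s range orthant >>.
Proof.
apply/seteqP; split; last first.
  apply: smallest_sub; first exact: sigma_algebra_measurable.
  by move=> _ [L _ <-]; exact: measurable_orthant.
apply: smallest_sub; first exact: smallest_sigma_algebra.
elim/big_ind: _ => // [X Y sX sY B [/sX|/sY] //|i _].
have -> : @measurable _ R = <<s @RGenCInfty.G R >>.
  exact: RGenCInfty.measurableE.
rewrite -g_sigma_preimageE.
apply: smallest_sub; first exact: smallest_sigma_algebra.
move=> _ [_ [x ->] <-]; apply: sub_sigma_algebra; exists [:: (i, x)] => //.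
by rewrite orthant_cons orthant_nil setIT setTI.
Qed.

End Orthants.

Section OrthantCutoff.
Variables (R : realType) (n : nat) (L : seq ('I_n * R)).
Local Notation vec := (vec R n).
Implicit Types (s : vec) (K : R).

Definition deficit (p : 'I_n * R) : vec :=
  vadd (vconst p.2) (vscale (-1) (ve p.1)).

Definition deficits : seq vec := vconst 0 :: map deficit L.

(* on the simplex, orthant_gap s = max (0, max_(p in L) (p.2 - s_(p.1))) *)
Definition orthant_gap s : R := vA deficits s.

Lemma dotv_deficit p s : simplex s -> dotv (deficit p) s = p.2 - tnth s p.1.
Proof. by move=> ss; rewrite dotvD dotvZ dotv_vconst // dotv_ve mulN1r. Qed.

Lemma orthant_gap_ge0 s : simplex s -> 0 <= orthant_gap s.
Proof. by move=> ss; rewrite -(dotv_vconst 0 ss) le_vA ?mem_head. Qed.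

Lemma orthant_gap_eq0 s : simplex s -> orthant L s -> orthant_gap s = 0.
Proof.
move=> ss sL; apply/le_anti; rewrite orthant_gap_ge0 // andbT.
apply: vA_le => // a; rewrite inE => /predU1P[->|/mapP[p pL ->]].
  by rewrite dotv_vconst.
by rewrite dotv_deficit // subr_le0 sL.
Qed.

Lemma orthant_gap_gt0 s : simplex s -> ~ orthant L s -> 0 < orthant_gap s.
Proof.
move=> ss /existsNP[p /not_implyP[pL /negP]]; rewrite -ltNge => sp.
apply: lt_le_trans (le_vA s (_ : deficit p \in deficits)).
  by rewrite dotv_deficit // subr_gt0.
by rewrite inE map_f ?orbT.
Qed.

Definition cutoff_firm K : seq vec := map (vscale K) deficits.

Definition cutoff_shifted_firm K : seq vec :=
  map (vadd (vconst (-1))) (cutoff_firm K).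

Definition cutoff K s : R :=
  1 - payoff (cutoff_firm K) s + payoff (cutoff_shifted_firm K) s.

Lemma cutoffE K s : 0 <= K -> simplex s ->
  cutoff K s = Num.max (1 - K * orthant_gap s) 0.
Proof.
move=> K0 ss.
have Kg0 : 0 <= K * orthant_gap s by rewrite mulr_ge0 ?orthant_gap_ge0.
have vK : vA (cutoff_firm K) s = K * orthant_gap s.
  apply: vA_map => // [u v uv|a]; first by rewrite ler_wpM2l.
  by rewrite dotvZ.
have vK1 : vA (cutoff_shifted_firm K) s = -1 + K * orthant_gap s.
  rewrite -vK; apply: vA_map => // [u v uv|a]; first by rewrite lerD2l.
  by rewrite dotvD dotv_vconst.
rewrite /cutoff /payoff /funrpos vK vK1 (max_l Kg0).
have [g1|g1] := leP (K * orthant_gap s) 1.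
  by rewrite max_r ?max_l; lra.
by rewrite max_l ?max_r; lra.
Qed.

End OrthantCutoff.

Lemma probability_setI_full d (T : measurableType d) (R : realType)
    (mu : probability T R) (A B : set T) :
  measurable A -> measurable B -> mu B = 1%E -> mu A = mu (A `&` B).
Proof.
move=> mA mB muB.
rewrite (measureDI mu mA mB) [X in (X + _)%E](_ : _ = 0%E) ?add0e //.
apply/le_anti; rewrite measure_ge0 andbT.
apply: (@le_trans _ _ (mu (~` B))).
  apply: le_measure; rewrite ?inE //; first exact: measurableD.
  exact: measurableC.
by rewrite probability_setC // muB subee.
Qed.

Section OrthantMeasure.
Variables (R : realType) (n : nat) (S : set (vec R n)).
Hypotheses (mS : measurable S) (sS : S `<=` simplex (n:=n)).
Variable L : seq ('I_n * R).
Local Notation vec := (vec R n).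
Implicit Types (mu : probability vec R) (K : R).

Lemma integrable_one_sub_payoff mu A : A != [::] ->
  mu.-integrable S (EFin \o (fun s => 1 - payoff A s)).
Proof.
move=> A0; apply: integrable_EFinB => //; last exact: integrable_payoff.
exact: finite_measure_integrable_cst.
Qed.

Lemma integrable_cutoff mu K : mu.-integrable S (EFin \o cutoff L K).
Proof.
apply: integrable_EFinD => //; first exact: integrable_one_sub_payoff.
exact: integrable_payoff.
Qed.

Lemma Rintegral_cutoff mu K : mu S = 1%E -> \int[mu]_(s in S) cutoff L K s =
  1 - value S mu (cutoff_firm L K) + value S mu (cutoff_shifted_firm L K).
Proof.
move=> muS; rewrite /cutoff RintegralD //; last exact: integrable_payoff.
  rewrite RintegralB ?Rintegral_cst_full //.
    exact: finite_measure_integrable_cst.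
  exact: integrable_payoff.
exact: integrable_one_sub_payoff.
Qed.

Lemma cvg_integral_cutoff mu :
  (\int[mu]_(s in S) (cutoff L k%:R s)%:E)%E @[k --> \oo] -->
  mu (orthant L `&` S).
Proof.
rewrite -integral_indic //; last exact: measurable_orthant.
apply: (@dominated_cvg _ _ _ mu S mS _ _ (cst 1%:E)) => //.
- by move=> k; exact: (measurable_int _ (integrable_cutoff mu _)).
- move=> s Ss; apply: cvg_near_cst; have ss := sS Ss.
  have [sL|nsL] := pselect (orthant L s).
    near=> k; rewrite indicE mem_set // cutoffE //.
    by rewrite orthant_gap_eq0 // mulr0 subr0 max_l.
  have gap0 := orthant_gap_gt0 ss nsL.
  near=> k; rewrite indicE memNset // cutoffE // max_r // subr_le0.
  rewrite -ler_pdivrMr // mul1r ltW //.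
  near: k; exact: nbhs_infty_gtr.
- exact: finite_measure_integrable_cst.
- move=> k s Ss /=; rewrite cutoffE //; last exact: sS.
  have := mulr_ge0 (ler0n _ k) (orthant_gap_ge0 L (sS Ss)).
  rewrite lee_fin ger0_norm ?le_max ?lexx ?orbT // ge_max ler01 andbT; lra.
Unshelve. all: by end_near.
Qed.

Lemma orthant_measure_eq (pi1 pi2 : probability vec R) :
  pi1 S = 1%E -> pi2 S = 1%E ->
  (forall A, A != [::] -> value S pi1 A = value S pi2 A) ->
  pi1 (orthant L) = pi2 (orthant L).
Proof.
move=> pi1S pi2S v12; have mL := measurable_orthant L.
rewrite (probability_setI_full mL mS pi1S) (probability_setI_full mL mS pi2S).
have := cvg_integral_cutoff (mu := pi1); have := cvg_integral_cutoff (mu := pi2).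
suff -> : (fun k : nat => \int[pi2]_(s in S) (cutoff L k%:R s)%:E)%E =
          (fun k : nat => \int[pi1]_(s in S) (cutoff L k%:R s)%:E)%E.
  by move=> c2 c1; exact: cvg_unique c1 c2.
apply/funext => k; rewrite -!(EFin_Rintegral mS); try exact: integrable_cutoff.
by rewrite !Rintegral_cutoff // !v12.
Qed.

End OrthantMeasure.

Lemma value_le_antisym (R : realType) (n : nat) (S : set (vec R n))
    (pi1 pi2 : probability (vec R n) R) :
  measurable S -> S `<=` simplex (n:=n) -> pi1 S = 1%E -> pi2 S = 1%E ->
  value_le S pi1 pi2 -> value_le S pi2 pi1 ->
  forall B, measurable B -> pi1 B = pi2 B.
Proof.
move=> mS sS pi1S pi2S le12 le21.
apply: (measure_unique (range (@orthant R n)) (fun=> setT)).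
- exact: measurable_orthantE.
- exact: setI_closed_orthant.
- by move=> _; exists [::]; rewrite ?orthant_nil.
- by rewrite bigcup_const.
- move=> _ [L _ <-]; apply: (orthant_measure_eq mS sS) => // A A0.
  by apply/le_anti; rewrite le12 ?le21.
- move=> _; apply: le_lt_trans (probability_le1 pi1 measurableT) _.
  by rewrite ltry.
Qed.

(** * Convex continuous functions as limits of the functions v_A *)

Lemma continuous_sum (R : realType) (T : topologicalType) (I : Type) (r : seq I)
    (F : I -> T -> R) :
  (forall i, continuous (F i)) -> continuous (fun x => \sum_(i <- r) F i x).
Proof.
move=> Fc; elim: r => [|i r IH].
  by under eq_fun do rewrite big_nil; exact: cst_continuous.
under eq_fun do rewrite big_cons.
by move=> x; apply: continuousD; [exact: Fc | exact: IH].
Qed.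

(* the simplex is transported to row vectors, where compactness and the
   extreme value theorem are available *)
Section SimplexTopology.
Variables (R : realType) (n : nat).
Local Notation vec := (vec R n).

Definition row_of_vec (x : vec) : 'rV[R]_n := \row_i tnth x i.
Definition vec_of_row (v : 'rV[R]_n) : vec := [tuple v ord0 i | i < n].

Lemma row_of_vecK : cancel row_of_vec vec_of_row.
Proof. by move=> x; apply: eq_from_tnth => i; rewrite tnth_mktuple mxE. Qed.

Lemma tnth_vec_of_row v i : tnth (vec_of_row v) i = v ord0 i.
Proof. exact: tnth_mktuple. Qed.

Definition simplex_row : set 'rV[R]_n := [set v | simplex (vec_of_row v)].

Lemma simplex_row_of_vec x : simplex x -> simplex_row (row_of_vec x).
Proof. by rewrite /simplex_row /= row_of_vecK. Qed.

Lemma ball_coord (v w : 'rV[R]_n) d : ball v d w ->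
  forall i, `|v ord0 i - w ord0 i| < d.
Proof.
rewrite -ball_normE /ball_ /= => vw i; apply: le_lt_trans vw.
have -> : `|v - w| = mx_norm (v - w) by [].
rewrite mx_normrE.
by apply: le_trans (le_bigmax _ _ (ord0, i)); rewrite /= !mxE.
Qed.

Lemma continuous_on_simplex_within (h : vec -> R) : continuous_on_simplex h ->
  {within simplex_row, continuous (h \o vec_of_row)}.
Proof.
move=> hc; apply/subspace_continuousP => v sv.
apply/cvgrPdist_lt => e e0; rewrite near_withinE.
have [d d0 hd] := hc _ sv e e0.
apply/nbhs_ballP; exists d => // w vw sw.
rewrite distrC; apply: hd => // i.
by rewrite !tnth_vec_of_row distrC; exact: ball_coord vw i.
Qed.

Lemma compact_simplex_row : compact simplex_row.
Proof.
apply: bounded_closed_compact.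
  exists 1; split; first exact: num_real.
  move=> M M1 v sv /=; have -> : `|v| = mx_norm v by [].
  rewrite mx_normrE.
  apply: bigmax_le => [|[i j] _ /=]; first by rewrite ltW // (lt_trans ltr01).
  have := simplex_tnth_le1 j sv.
  rewrite (ord1 i) tnth_vec_of_row => /andP[v0 v1].
  by rewrite ger0_norm // (le_trans v1) // ltW.
have -> : simplex_row =
    \bigcap_i ((fun v : 'rV[R]_n => v ord0 i) @^-1` [set x | 0 <= x]) `&`
    ((fun v : 'rV[R]_n => \sum_(i < n) v ord0 i) @^-1` [set 1]).
  apply/seteqP; split => v [v0 v1].
    split => [i _ | ]; first by have := v0 i; rewrite tnth_vec_of_row.
    by rewrite /= -v1; apply: eq_bigr => i _; rewrite tnth_vec_of_row.
  split => [i | ]; first by rewrite tnth_vec_of_row; exact: v0.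
  by rewrite -v1; apply: eq_bigr => i _; rewrite tnth_vec_of_row.
apply: closedI.
  apply: closed_bigI => i _; apply: preimage_closed; last exact: closed_ge.
  by move=> v _; exact: coord_continuous.
apply: preimage_closed; last exact: closed_eq.
by move=> v _; apply: continuous_sum => i; exact: coord_continuous.
Qed.

End SimplexTopology.

Arguments simplex_row {R n}.

Lemma quadratic_perturbation_ge0 (R : realType) (P Q : R) : 0 <= Q ->
  (forall l, 0 < l -> l <= 1 -> 0 <= l ^+ 2 * Q + 2 * l * P) -> 0 <= P.
Proof.
move=> Q0 PQ; rewrite leNgt; apply/negP => P0.
pose l := Num.min 1 (- P / (Q + 1)).
have Q1 : 0 < Q + 1 by lra.
have l0 : 0 < l by rewrite lt_min ltr01 /= divr_gt0 // oppr_gt0.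
have lQ : l * (Q + 1) <= - P by rewrite -ler_pdivlMr // ge_min lexx orbT.
have l1 : l <= 1 by rewrite ge_min lexx.
have := PQ l l0 l1.
have -> : l ^+ 2 * Q + 2 * l * P = l * (l * Q + 2 * P) by rewrite expr2; ring.
by rewrite pmulr_rge0 //; nra.
Qed.

Lemma ler_sqr_max0 (R : realType) (a z : R) : 0 <= a -> a <= Num.max z 0 ->
  a ^+ 2 <= z ^+ 2.
Proof.
move=> a0; rewrite le_max => /orP[az|a_le0]; first by rewrite !expr2; nra.
have -> : a = 0 by lra.
by rewrite expr2 mul0r sqr_ge0.
Qed.

Section AffineMinorant.
Variables (R : realType) (n : nat).
Local Notation vec := (vec R n).
Variable h : vec -> R.
Hypothesis hconv : convex_on_simplex h.
Variables (x0 : vec) (t0 : R).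

(* squared distance from (x0, t0) to the point (y, max (h y) t0) of the
   epigraph of h *)
Definition epi_dist (y : vec) : R :=
  \sum_(i < n) (tnth y i - tnth x0 i) ^+ 2 + (Num.max (h y - t0) 0) ^+ 2.

Variable ys : vec.
Hypotheses (sys : simplex ys)
  (ys_min : forall y, simplex y -> epi_dist ys <= epi_dist y).

Let w := Num.max (h ys - t0) 0.
Let u : vec := [tuple tnth x0 i - tnth ys i | i < n].

Let w_ge0 : 0 <= w. Proof. by rewrite le_max lexx orbT. Qed.
Let h_ys_le : h ys <= t0 + w. Proof. by rewrite -lerBlDl le_max lexx. Qed.

Let dotv_u_sub x :
  dotv u x - dotv u ys = \sum_(i < n) tnth u i * (tnth x i - tnth ys i).
Proof. by rewrite /dotv -sumrB; apply: eq_bigr => i _; rewrite mulrBr. Qed.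

Lemma epi_dist_comb x l : simplex x -> 0 <= l <= 1 ->
  epi_dist (comb l x ys) <= epi_dist ys
    + l ^+ 2 * (\sum_(i < n) (tnth x i - tnth ys i) ^+ 2
                + (h x - (t0 + w)) ^+ 2)
    + 2 * l * (w * (h x - (t0 + w)) - (dotv u x - dotv u ys)).
Proof.
move=> sx l01; have /andP[l0 l1] := l01.
have l1' : 0 <= 1 - l by rewrite subr_ge0.
have h_comb : h (comb l x ys) - t0 <= w + l * (h x - (t0 + w)).
  have := hconv sx sys l01; have := ler_wpM2l l1' h_ys_le; lra.
have max_comb : (Num.max (h (comb l x ys) - t0) 0) ^+ 2 <=
    w ^+ 2 + 2 * l * w * (h x - (t0 + w)) + l ^+ 2 * (h x - (t0 + w)) ^+ 2.
  have -> : w ^+ 2 + 2 * l * w * (h x - (t0 + w))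
      + l ^+ 2 * (h x - (t0 + w)) ^+ 2 = (w + l * (h x - (t0 + w))) ^+ 2.
    by rewrite !expr2; ring.
  apply: ler_sqr_max0; first by rewrite le_max lexx orbT.
  by rewrite ge_max le_max h_comb le_max lexx !orbT.
have sum_comb : \sum_(i < n) (tnth (comb l x ys) i - tnth x0 i) ^+ 2 =
    \sum_(i < n) (tnth ys i - tnth x0 i) ^+ 2
    + l ^+ 2 * \sum_(i < n) (tnth x i - tnth ys i) ^+ 2
    - 2 * l * (dotv u x - dotv u ys).
  rewrite dotv_u_sub !mulr_sumr -big_split -sumrB /=.
  by apply: eq_bigr => i _; rewrite !tnth_mktuple; ring.
rewrite /epi_dist sum_comb -/w; lra.
Qed.

(* first-order optimality of ys along the segment from ys to x *)
Lemma dotv_sub_le x :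
  simplex x -> dotv u x - dotv u ys <= w * (h x - (t0 + w)).
Proof.
move=> sx; rewrite -subr_ge0.
apply: (@quadratic_perturbation_ge0 _ _
  (\sum_(i < n) (tnth x i - tnth ys i) ^+ 2 + (h x - (t0 + w)) ^+ 2)).
  by rewrite addr_ge0 ?sqr_ge0 // sumr_ge0 // => i _; exact: sqr_ge0.
move=> l l0 l1; have l01 : 0 <= l <= 1 by rewrite ltW.
have := ys_min (simplex_comb sx sys l01); have := epi_dist_comb sx l01; lra.
Qed.

Hypotheses (sx0 : simplex x0) (ht0 : t0 < h x0).

Let dotv_u_x0 : dotv u x0 - dotv u ys = \sum_(i < n) tnth u i ^+ 2.
Proof.
by rewrite dotv_u_sub; apply: eq_bigr => i _; rewrite tnth_mktuple expr2.
Qed.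

Lemma epi_gap_gt0 : 0 < w.
Proof.
rewrite lt_neqAle w_ge0 andbT; apply/eqP => w0.
have u0 i : tnth u i = 0.
  apply/eqP; rewrite -sqrf_eq0 eq_le sqr_ge0 andbT.
  have := dotv_sub_le sx0; rewrite -w0 mul0r dotv_u_x0 => /(le_trans _); apply.
  by rewrite (bigD1 i) //= lerDl sumr_ge0 // => j _; exact: sqr_ge0.
have ys_x0 : ys = x0.
  apply: eq_from_tnth => i; apply/eqP.
  by rewrite eq_sym -subr_eq0 -(u0 i) tnth_mktuple.
have : h x0 - t0 <= w by rewrite /w ys_x0 le_max lexx.
by rewrite -w0 subr_le0 leNgt ht0.
Qed.

Lemma affine_minorant_of_min : exists (a : vec) (b : R),
  (forall x, simplex x -> dotv a x + b <= h x) /\ t0 < dotv a x0 + b.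
Proof.
have w0 := epi_gap_gt0.
(* the hyperplane through (ys, t0 + w) orthogonal to (u, -w) *)
exists (vscale w^-1 u), (t0 + w - w^-1 * dotv u ys).
have affE x : dotv (vscale w^-1 u) x + (t0 + w - w^-1 * dotv u ys) =
    (dotv u x - dotv u ys) / w + (t0 + w).
  by rewrite dotvZ; field; rewrite gt_eqF.
split=> [x sx|]; rewrite affE.
  by have := dotv_sub_le sx; rewrite -ler_pdivrMl // mulrC; lra.
have : 0 <= (dotv u x0 - dotv u ys) / w.
  apply: divr_ge0; last exact: ltW.
  by rewrite dotv_u_x0 sumr_ge0 // => i _; exact: sqr_ge0.
lra.
Qed.

End AffineMinorant.

Lemma continuous_sqr_max0 (R : realType) (t0 : R) :
  continuous (fun y : R => (Num.max (y - t0) 0) ^+ 2).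
Proof.
move=> y; have cmax : {for y, continuous (fun y : R => Num.max (y - t0) 0)}.
  apply: (@continuous_max R R (fun y => y - t0) (fun=> 0)).
    by apply: continuousB; [exact: cvg_id | exact: cst_continuous].
  exact: cst_continuous.
by under eq_fun do rewrite expr2; exact: (continuousM cmax cmax).
Qed.

Section ConvexApproximation.
Variables (R : realType) (n : nat).
Local Notation vec := (vec R n).
Variable h : vec -> R.
Hypotheses (hconv : convex_on_simplex h) (hcont : continuous_on_simplex h).

Lemma affine_minorant x0 t0 : simplex x0 -> t0 < h x0 ->
  exists (a : vec) (b : R),
  (forall x, simplex x -> dotv a x + b <= h x) /\ t0 < dotv a x0 + b.
Proof.
move=> sx0 ht0; pose f (v : 'rV[R]_n) := epi_dist h x0 t0 (vec_of_row v).
have fc : {within @simplex_row R n, continuous f}.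
  have -> : f =
      (fun v : 'rV[R]_n => \sum_(i < n) (v ord0 i - tnth x0 i) ^+ 2) \+
      ((fun y : R => (Num.max (y - t0) 0) ^+ 2) \o (h \o @vec_of_row R n)).
    apply/funext => v; rewrite /f /epi_dist.
    by under eq_bigr do rewrite tnth_vec_of_row.
  move=> v; apply: continuousD.
    apply: (continuous_subspaceT (A := @simplex_row R n)) => {}v.
    apply: continuous_sum => i {}v.
    have ci : {for v, continuous (fun v : 'rV[R]_n => v ord0 i - tnth x0 i)}.
      by apply: continuousB; [exact: coord_continuous | exact: cst_continuous].
    by under eq_fun do rewrite expr2; exact: (continuousM ci ci).
  apply: within_continuous_comp; last exact: continuous_on_simplex_within.
  by move=> y _; exact: continuous_sqr_max0.
have ne : @simplex_row R n !=set0.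
  by exists (row_of_vec x0); exact: simplex_row_of_vec.
have [v /[!inE] sv vmin] := EVT_min_rV ne (@compact_simplex_row R n) fc.
apply: (affine_minorant_of_min hconv (ys := vec_of_row v)) => // y sy.
have := vmin (row_of_vec y); rewrite /f row_of_vecK inE; apply.
exact: simplex_row_of_vec.
Qed.

Lemma local_affine_minorant x0 eps : simplex x0 -> 0 < eps ->
  exists p : vec * R * R, 0 < p.2 /\
   (forall x, simplex x -> dotv p.1.1 x + p.1.2 <= h x) /\
   (forall x, simplex x -> (forall i, `|tnth x i - tnth x0 i| < p.2) ->
      h x - eps < dotv p.1.1 x + p.1.2).
Proof.
move=> sx0 e0.
have e4 : 0 < eps / 4 by rewrite divr_gt0.
have [a [b [minor ax0]]] : exists a b,
    (forall x, simplex x -> dotv a x + b <= h x) /\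
    h x0 - eps / 2 < dotv a x0 + b.
  by apply: affine_minorant => //; rewrite ltrBlDr ltrDl divr_gt0.
have [d1 d1_0 hd1] := hcont sx0 e4.
set d2 := eps / 4 / (l1norm a + 1).
have a1 : 0 < l1norm a + 1 by rewrite ltr_wpDl ?l1norm_ge0.
have d2_0 : 0 < d2 by rewrite divr_gt0.
exists (a, b, Num.min d1 d2); split; first by rewrite lt_min d1_0.
split=> // x sx xx0 /=.
have md1 : Num.min d1 d2 <= d1 by rewrite ge_min lexx.
have md2 : Num.min d1 d2 <= d2 by rewrite ge_min lexx orbT.
have := hd1 x sx (fun i => lt_le_trans (xx0 i) md1).
have := ler_dist_dotv a (fun i => lt_le_trans (xx0 i) md2).
have ad2 : l1norm a * d2 <= eps / 4.
  by rewrite /d2 mulrA ler_pdivrMr // mulrC ler_wpM2l ?lerDl // ltW.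
rewrite !ltr_norml !ler_norml; lra.
Qed.

Lemma finite_affine_minorants eps : 0 < eps -> exists AB : seq (vec * R),
  (forall p, p \in AB -> forall x, simplex x -> dotv p.1 x + p.2 <= h x) /\
  (forall x, simplex x -> exists2 p, p \in AB & h x - eps < dotv p.1 x + p.2).
Proof.
move=> e0.
pose good_at v (p : vec * R * R) := 0 < p.2 /\
   (forall x, simplex x -> dotv p.1.1 x + p.1.2 <= h x) /\
   (forall x, simplex x ->
      (forall i, `|tnth x i - tnth (vec_of_row v) i| < p.2) ->
      h x - eps < dotv p.1.1 x + p.1.2).
have [F HF] : {F : 'rV[R]_n -> vec * R * R &
    forall v, simplex_row v -> good_at v (F v)}.
  apply: (@choice _ _ (fun v p => simplex_row v -> good_at v p)) => v.
  have [sv|nsv] := pselect (simplex_row v); last by exists (vconst 0, 0, 1).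
  by have [p ?] := local_affine_minorant sv e0; exists p.
have cover_simplex :
    simplex_row `<=` cover simplex_row (fun v => ball v (F v).2).
  by move=> v sv; exists v => //; apply: ballxx; case: (HF v sv).
have := @compact_simplex_row R n; rewrite compact_cover => /(_ _ simplex_row
  (fun v => ball v (F v).2) (fun v _ => ball_open v _) cover_simplex).
move=> [D Dsub Dcover].
exists [seq (F v).1 | v <- finmap.enum_fset D]; split.
  move=> _ /mapP[v vD ->]; have /[!inE] sv := Dsub _ vD.
  by case: (HF v sv) => _ [].
move=> x sx; have [v /= vD xv] := Dcover _ (simplex_row_of_vec sx).
have /[!inE] sv := Dsub _ vD; have [_ [_ near_v]] := HF v sv.
exists (F v).1; first exact: map_f.
apply: near_v => // i; rewrite distrC; have := ball_coord xv i.
by rewrite tnth_vec_of_row mxE.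
Qed.

Lemma vA_approx : (0 < n)%N -> forall eps, 0 < eps -> exists2 A : seq vec,
  A != [::] & forall x, simplex x -> vA A x <= h x /\ h x <= vA A x + eps.
Proof.
move=> n0 eps e0; have [AB [minor cover]] := finite_affine_minorants e0.
pose A := [seq vadd p.1 (vconst p.2) | p <- AB].
have affE (p : vec * R) x :
    simplex x -> dotv (vadd p.1 (vconst p.2)) x = dotv p.1 x + p.2.
  by move=> sx; rewrite dotvD dotv_vconst.
have A0 : A != [::].
  have [p pAB _] := cover _ (simplex_ve (R := R) (Ordinal n0)).
  by rewrite -size_eq0 size_map size_eq0; apply/eqP => AB0; rewrite AB0 in pAB.
exists A => // x sx; split.
  by apply: vA_le => // _ /mapP[p pAB ->]; rewrite affE // minor.
have [p pAB hp] := cover x sx.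
have : dotv (vadd p.1 (vconst p.2)) x <= vA A x by apply: le_vA; exact: map_f.
by rewrite affE //; lra.
Qed.

End ConvexApproximation.

Section ValueLeMrel.
Variables (R : realType) (n : nat) (S : set (vec R n)).
Hypotheses (n0 : (0 < n)%N) (mS : measurable S) (sS : S `<=` simplex (n:=n)).
Local Notation vec := (vec R n).

Lemma integrable_convex (mu : probability vec R) (h : vec -> R) :
  convex_on_simplex h -> continuous_on_simplex h ->
  mu.-integrable S (EFin \o h).
Proof.
move=> hconv hcont.
have [As HAs] : {As : nat -> seq vec & forall k, As k != [::] /\
    forall x, simplex x -> vA (As k) x <= h x /\ h x <= vA (As k) x + k.+1%:R^-1}.
  apply: (@choice _ _ (fun k A => A != [::] /\ forall x, simplex x ->
    vA A x <= h x /\ h x <= vA A x + k.+1%:R^-1)) => k.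
  have k0 : 0 < k.+1%:R^-1 :> R by rewrite invr_gt0 ltr0Sn.
  by have [A A0 HA] := vA_approx hconv hcont n0 k0; exists A.
have [A0 HA0] := HAs 0%N.
apply: (@integrable_bounded _ _ _ mS _ _ (vA_bound (As 0%N) + 1)).
  apply: (measurable_fun_cvg (h := fun k => vA (As k))) => [k|x Sx].
    exact: measurable_vA.
  apply/cvgrPdist_lt => e e0; near=> k.
  have [_ HA] := HAs k; have [lo hi] := HA x (sS Sx).
  have ke : k.+1%:R^-1 < e.
    by near: k; exact: (near_infty_natSinv_lt (PosNum e0)).
  by rewrite ger0_norm ?subr_ge0 // ltrBlDl (le_lt_trans hi) // ltrD2l.
move=> x Sx; have [lo hi] := HA0 x (sS Sx).
have := ler_norm_vA A0 (sS Sx); rewrite invr1 in hi.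
by rewrite !ler_norml; lra.
Unshelve. all: by end_near.
Qed.

Variables pi1 pi2 : probability vec R.
Hypotheses (pi1S : pi1 S = 1%E) (pi2S : pi2 S = 1%E).
Hypothesis le12 : value_le S pi1 pi2.

Lemma le_Rintegral_vA A : A != [::] ->
  \int[pi1]_(s in S) vA A s <= \int[pi2]_(s in S) vA A s.
Proof.
move=> A0; pose A' := map (vadd (vconst (vA_bound A))) A.
have A'0 : A' != [::] by rewrite -size_eq0 size_map size_eq0.
suff vAE (mu : probability vec R) : mu S = 1%E ->
    \int[mu]_(s in S) vA A s = value S mu A' - vA_bound A.
  by rewrite !vAE // lerD2r le12.
move=> muS; rewrite /value -[X in _ - X](Rintegral_cst_full mS _ muS).
rewrite -RintegralB //;
  [|exact: integrable_payoff|exact: finite_measure_integrable_cst].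
apply: eq_Rintegral => s /[!inE] /sS ss; rewrite /payoff /funrpos.
rewrite (vA_map (g := +%R (vA_bound A))) //.
- have := ler_norm_vA A0 ss; rewrite ler_norml => /andP[lo _].
  by rewrite max_l ?[_ + vA A s]addrC ?addrK //; lra.
- by move=> u v uv; rewrite lerD2l.
- by move=> a; rewrite dotvD dotv_vconst.
Qed.

Lemma value_le_Mrel : Mrel S pi2 pi1.
Proof.
move=> h hconv hcont.
have ih (mu : probability vec R) := integrable_convex mu hconv hcont.
rewrite -!(EFin_Rintegral mS) // lee_fin; apply/ler_addgt0Pr => e e0.
have [A A0 hA] := vA_approx hconv hcont n0 e0.
have iA (mu : probability vec R) := integrable_vA mS sS mu A0.
have ie (mu : probability vec R) : mu.-integrable S (EFin \o cst e) :=
  finite_measure_integrable_cst mu e mS.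
apply: le_trans (_ : _ <= \int[pi1]_(s in S) vA A s + e) _.
  rewrite -[X in _ + X](Rintegral_cst_full mS e pi1S).
  rewrite -RintegralD //; [|exact: iA|exact: ie].
  apply: le_Rintegral => //; first exact: ih.
    exact: integrable_EFinD.
  by move=> s /sS /hA[].
rewrite lerD2r; apply: le_trans (le_Rintegral_vA A0) _.
by apply: le_Rintegral => //; [exact: iA | exact: ih | move=> s /sS /hA[]].
Qed.

End ValueLeMrel.

Lemma MrelE (R : realType) (n : nat) (S : set (vec R n))
    (pi1 pi2 : probability (vec R n) R) :
  (0 < n)%N -> measurable S -> S `<=` simplex (n:=n) ->
  pi1 S = 1%E -> pi2 S = 1%E -> Mrel S pi2 pi1 <-> value_le S pi1 pi2.
Proof.
move=> n0 mS sS pi1S pi2S.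
by split; [exact: Mrel_value_le | exact: value_le_Mrel].
Qed.

Theorem proposition1 (R : realType) (n : nat) (S : set (vec R n)) (c : R)
  (pi pi' : probability (vec R n) R) :
  (0 < n)%N ->
  measurable S -> S `<=` simplex (n:=n) ->
  0 < c ->
  pi S = 1%E -> pi' S = 1%E ->
  (forall i, skill S pi i = skill S pi' i) ->
  let eqpop := forall A, measurable A -> pi A = pi' A in
  (sys_disc S c pi pi' <-> Mrel S pi' pi /\ ~ eqpop) /\
  (unsys_disc S c pi pi' <-> ~ Mrel S pi pi' /\ ~ Mrel S pi' pi) /\
  (no_disc S c pi pi' <-> eqpop).
Proof.
move=> n0 mS sS c0 piS pi'S _ eqpop.
have eqpopE : eqpop <-> value_le S pi pi' /\ value_le S pi' pi.
  split=> [eq_pi|[le12 le21]].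
    by split; apply: eq_value_le => B mB; rewrite eq_pi.
  exact: (value_le_antisym mS sS piS pi'S le12 le21).
rewrite /no_disc !(sys_discE mS sS c0) // (unsys_discE mS sS c0) //.
rewrite !(MrelE n0 mS sS) // eqpopE.
by have [le12|nle12] := pselect (value_le S pi pi');
   have [le21|nle21] := pselect (value_le S pi' pi); tauto.
Qed.
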